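(* Let $\mathcal{D}$ be a distribution on $\mathbb{R}^d\times\mathbb{R}$ with $\|\mathbf{x}\|_\infty\le1$ and $|y|\le B$ almost surely. The GAELR algorithm (with any sampling distribution $(q_1,\dots,q_d)$ and budget $k$) generates gradient estimates satisfying, for all $t$, $$\big\|\mathbb{E}_{\mathcal{D},A}[\widetilde{\mathbf{g}}_t^2]\big\|_\infty\le 4B^2\Big(\frac1k\big\|\mathbb{E}_{\mathcal{D},A}[\widetilde{\mathbf{x}}_{t,r}^2]\big\|_\infty+1\Big).$$
   Context: For a vector $\mathbf{a}$, $\mathbf{a}^2$ denotes its coordinatewise square. $\mathrm{clip}(x,c)=\max\{\min\{x,c\},-c\}$. Algorithm GAELR (parameters $B,\eta>0$, probabilities $q_i$ summing to $1$, integer budget $k>0$; i.i.d. examples $(\mathbf{x}_t,y_t)\sim\mathcal{D}$): $\mathbf{z}_1^\pm=\mathbf{1}_d$. For each $t$: $\mathbf{w}_t=(\mathbf{z}_t^+-\mathbf{z}_t^-)B/(\|\mathbf{z}_t^+\|_1+\|\mathbf{z}_t^-\|_1)$; for $r=1..k$ draw $i_{t,r}$ with probability $q_{i_{t,r}}$ and set $\widetilde{\mathbf{x}}_{t,r}=\frac{1}{q_{i_{t,r}}}\mathbf{x}_t[i_{t,r}]\mathbf{e}_{i_{t,r}}$ (identically distributed over $r$); $\widetilde{\mathbf{x}}_t=\frac1k\sum_r\widetilde{\mathbf{x}}_{t,r}$; draw $j_t$ with probability $p_j=|w_{t,j}|/\|\mathbf{w}_t\|_1$, $\widetilde\phi_t=\frac{w_{t,j_t}}{p_{j_t}}\mathbf{x}_t[j_t]-y_t$;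 $\widetilde{\mathbf{g}}_t=\widetilde\phi_t\widetilde{\mathbf{x}}_t$; $\bar{\mathbf{g}}_t[i]=\mathrm{clip}(\widetilde{\mathbf{g}}_t[i],1/\eta)$; $\mathbf{z}_{t+1}^+[i]=\mathbf{z}_t^+[i]e^{-\eta\bar{\mathbf{g}}_t[i]}$, $\mathbf{z}_{t+1}^-[i]=\mathbf{z}_t^-[i]e^{\eta\bar{\mathbf{g}}_t[i]}$. All draws independent. $\mathbb{E}_{\mathcal{D},A}$ is expectation over examples and algorithm randomness. *)

From HB Require Import structures.
From mathcomp Require Import all_boot all_order all_algebra.
From mathcomp Require Import all_classical all_reals all_analysis.
Set Implicit Arguments. Unset Strict Implicit. Unset Printing Implicit Defensive.
Import Order.TTheory GRing.Theory Num.Theory.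
Import numFieldNormedType.Exports.
Local Open Scope classical_set_scope.
Local Open Scope ring_scope.

(* An example is (X w, Y w) where w : T is drawn from the probability P;    *)
(* this represents the distribution D on R^d x R.           *)

Section GAELR.
Variables (R : realType) (d k : nat).

Definition state := (('I_d -> R) * ('I_d -> R))%type.

Definition l1norm (v : 'I_d -> R) : R := \sum_(i < d) `|v i|.

Definition gaelr_w (B : R) (z : state) : 'I_d -> R :=
  fun i => (z.1 i - z.2 i) * B / (l1norm z.1 + l1norm z.2).

Definition gaelr_p (w : 'I_d -> R) (j : 'I_d) : R :=
  if l1norm w == 0 then d%:R^-1 else `|w j| / l1norm w.

Definition gaelr_xr (q : 'I_d -> R) (x : 'I_d -> R) (i : 'I_d) : 'I_d -> R :=
  fun i' => if i' == i then x i / q i else 0.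

Definition gaelr_xt (q : 'I_d -> R) (x : 'I_d -> R) (I : {ffun 'I_k -> 'I_d})
  : 'I_d -> R :=
  fun i' => k%:R^-1 * \sum_(r < k) gaelr_xr q x (I r) i'.

Definition gaelr_phi (w x : 'I_d -> R) (y : R) (j : 'I_d) : R :=
  w j / gaelr_p w j * x j - y.

Definition gaelr_g (B : R) (q : 'I_d -> R) (z : state) (x : 'I_d -> R) (y : R)
  (I : {ffun 'I_k -> 'I_d}) (j : 'I_d) : 'I_d -> R :=
  fun i => gaelr_phi (gaelr_w B z) x y j * gaelr_xt q x I i.

Definition clip (x c : R) : R := Num.max (Num.min x c) (- c).

Definition gaelr_next (B eta : R) (q : 'I_d -> R) (z : state) (x : 'I_d -> R)
  (y : R) (I : {ffun 'I_k -> 'I_d}) (j : 'I_d) : state :=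
  let g := gaelr_g B q z x y I j in
  (fun i => z.1 i * expR (- (eta * clip (g i) eta^-1)),
   fun i => z.2 i * expR (eta * clip (g i) eta^-1)).

Definition gaelr_init : state := (fun _ => 1, fun _ => 1).

Variables (dT : measure_display) (T : measurableType dT).

(* Expectation over one round (example, i_{t,1..k}, j_t) of a nonnegative   *)
(* quantity F, from state z.                                                *)
Definition round_exp (B : R) (P : probability T R)
  (q : 'I_d -> R) (z : state)
  (F : T -> {ffun 'I_k -> 'I_d} -> 'I_d -> \bar R) : \bar R :=
  (\int[P]_(om in setT)
     \sum_(I : {ffun 'I_k -> 'I_d})
        ((\prod_(r < k) q (I r))%:E *
         \sum_(j < d) ((gaelr_p (gaelr_w B z) j)%:E * F om I j)))%E.

(* Expectation, over examples and algorithm randomness, of a nonnegative   *)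
(* quantity F of the round that comes after t further rounds from z.        *)
Fixpoint proc_exp (B eta : R) (P : probability T R) (X : T -> 'I_d -> R)
  (Y : T -> R) (q : 'I_d -> R)
  (F : state -> T -> {ffun 'I_k -> 'I_d} -> 'I_d -> \bar R)
  (t : nat) (z : state) : \bar R :=
  match t with
  | 0 => round_exp B P q z (F z)
  | t'.+1 => round_exp B P q z (fun om I j =>
       proc_exp B eta P X Y q F t' (gaelr_next B eta q z (X om) (Y om) I j))
  end.

Definition Eg2 B eta P X Y q (t : nat) (i : 'I_d) : \bar R :=
  proc_exp B eta P X Y q
    (fun z om I j => ((gaelr_g B q z (X om) (Y om) I j i) ^+ 2)%:E) t.-1 gaelr_init.

Definition Exr2 B eta P X Y q (t : nat) (r : 'I_k) (i : 'I_d) : \bar R :=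
  proc_exp B eta P X Y q
    (fun z om I j => ((gaelr_xr q (X om) (I r) i) ^+ 2)%:E) t.-1 gaelr_init.

Definition enorm_inf (v : 'I_d -> \bar R) : \bar R := (\big[maxe/0%E]_(i < d) v i)%E.

End GAELR.

From HB Require Import structures.
From mathcomp Require Import all_boot all_order all_algebra.
From mathcomp Require Import all_classical all_reals all_analysis.
From mathcomp Require Import measurable_realfun ring lra.
Import Order.TTheory GRing.Theory Num.Theory.
Import HBNNSimple.
Local Open Scope classical_set_scope.
Local Open Scope ring_scope.

(** Given the state, the importance weight [w_j / p_j] has absolute value
    [||w||_1 <= B], so [|phi~| <= 2B] and [g~[i]^2 <= 4B^2 x~_t[i]^2].  Since
    [x~_t] is the mean of [k] i.i.d. copies of [x~_{t,r}],
    [E x~_t[i]^2 = E x~_{t,r}[i]^2 / k + (1 - 1/k) (E x~_{t,r}[i])^2], and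
    [E x~_{t,r}[i]] is [x[i]] or [0].  This affine bound holds in every round
    from every state, so it survives averaging over the earlier rounds.  The
    integrands depending on the past are never shown measurable: the integral
    of a nonnegative function is the supremum over its simple minorants, and
    that suffices for monotonicity. *)

Section integral_without_measurability.
Local Open Scope ereal_scope.
Context dT (T : measurableType dT) (R : realType).

Lemma sintegral_le_integralT (mu : {measure set T -> \bar R})
    (h : {nnsfun T >-> R}) (g : T -> \bar R) :
  (forall x, 0 <= g x) -> (forall x, (h x)%:E <= g x) ->
  sintegral mu h <= \int[mu]_x g x.
Proof. by move=> g0 hg; rewrite ge0_integralTE //; apply: ereal_sup_ubound; exists h. Qed.

Lemma ge0_integralT_le (mu : {measure set T -> \bar R}) (f : T -> \bar R) c :
  (forall x, 0 <= f x) ->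
  (forall h : {nnsfun T >-> R}, (forall x, (h x)%:E <= f x) -> sintegral mu h <= c) ->
  \int[mu]_x f x <= c.
Proof.
by move=> f0 hc; rewrite ge0_integralTE //; apply: ge_ereal_sup => _ [h /hc hc' <-].
Qed.

Lemma ge0_le_integralT (mu : {measure set T -> \bar R}) (f g : T -> \bar R) :
  (forall x, 0 <= f x) -> (forall x, f x <= g x) ->
  \int[mu]_x f x <= \int[mu]_x g x.
Proof.
move=> f0 fg; have g0 x : 0 <= g x := le_trans (f0 x) (fg x).
apply: ge0_integralT_le => // h hf.
by apply: sintegral_le_integralT => // x; exact: le_trans (hf x) (fg x).
Qed.

Lemma integralT_affine (P : probability T R) (f : T -> R) (a b : R) :
  (0 <= a)%R -> (0 <= b)%R -> (forall x, 0 <= f x)%R -> measurable_fun setT f ->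
  \int[P]_x (a * f x + b)%:E = a%:E * \int[P]_x (f x)%:E + b%:E.
Proof.
move=> a0 b0 f0 mf.
under eq_integral do rewrite EFinD EFinM.
rewrite ge0_integralD //; last 2 first.
- by move=> x _; rewrite mule_ge0 // lee_fin.
- by apply: measurable_funeM; exact/measurable_EFinP.
rewrite ge0_integralZl_EFin //; last 2 first.
- by move=> x _; rewrite lee_fin.
- exact/measurable_EFinP.
rewrite integral_cst //; congr (_ + _).
by rewrite [X in _ * X]probability_setT mule1.
Qed.

Lemma ae_le_affine_integralT (P : probability T R) (f g : T -> \bar R) (a b : R) :
  (0 < a)%R -> (0 <= b)%R -> (forall x, 0 <= f x) -> (forall x, 0 <= g x) ->
  {ae P, forall x, f x <= a%:E * g x + b%:E} ->
  \int[P]_x f x <= a%:E * \int[P]_x g x + b%:E.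
Proof.
move=> a0 b0 f0 g0 [N [mN PN0 fgN]].
have fg x : ~ N x -> f x <= a%:E * g x + b%:E.
  by move=> Nx; apply: contrapT => /(fgN x).
apply: ge0_integralT_le => // h hf.
(* A measurable minorant of [g] whose affine image dominates [h] off [N]. *)
pose h' x := (\1_(~` N) x * (Num.max (h x - b) 0 / a))%R.
have h'0 x : (0 <= h' x)%R.
  by rewrite mulr_ge0 // divr_ge0 ?le_max ?lexx ?orbT // ltW.
have mh' : measurable_fun setT h'.
  apply: measurable_funM; first exact/measurable_indic/measurableC.
  apply: measurable_funM => //; apply: measurable_maxr => //.
  exact: measurable_funB.
have h'g x : (h' x)%:E <= g x.
  rewrite /h' indicE; case: (boolP (x \in ~` N)) => [/set_mem Nx|_]; last by rewrite mul0r.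
  have := le_trans (hf x) (fg x Nx); rewrite mul1r.
  move: (g0 x); case: (g x) => [r| |] //= r0; last by rewrite leey.
  rewrite -EFinM -EFinD !lee_fin ler_pdivrMr // ge_max lerBlDr mulrC => ->.
  by rewrite mulr_ge0 // ltW.
have hh' x : ~ N x -> (h x <= a * h' x + b)%R.
  move=> Nx; rewrite /h' indicE mem_set // mul1r mulrCA divff ?gt_eqF // mulr1.
  by rewrite -lerBlDr le_max lexx.
apply: (@le_trans _ _ (\int[P]_x (a * h' x + b)%:E)).
  have -> : sintegral P h = \int[P]_x (h x)%:E by rewrite integral_nnsfun // patch_setT.
  apply: ae_ge0_le_integral => //.
  - by move=> x _; rewrite lee_fin.
  - exact/measurable_EFinP.
  - by move=> x _; rewrite lee_fin addr_ge0 // mulr_ge0 // ltW.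
  - by apply/measurable_EFinP; apply: measurable_funD => //; exact: measurable_funM.
  exists N; split => // x /= Hx; apply: contrapT => Nx.
  by apply: Hx => _; rewrite lee_fin hh'.
rewrite integralT_affine ?(ltW a0) //; apply: leeD => //.
by apply: lee_wpmul2l; [rewrite lee_fin ltW | exact: ge0_le_integralT].
Qed.

End integral_without_measurability.

Section iid_expectation.
Context {R : numFieldType} {J : finType} {k : nat} (q : J -> R).

Definition iid_exp (F : {ffun 'I_k -> J} -> R) : R :=
  \sum_(I : {ffun 'I_k -> J}) (\prod_(r < k) q (I r)) * F I.

Lemma eq_iid_exp F G : (forall I, F I = G I) -> iid_exp F = iid_exp G.
Proof. by move=> FG; apply: eq_bigr => I _; rewrite FG. Qed.

Lemma iid_exp_prod (h : 'I_k -> J -> R) :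
  iid_exp (fun I => \prod_(r < k) h r (I r)) = \prod_(r < k) \sum_j q j * h r j.
Proof. by rewrite bigA_distr_bigA; apply: eq_bigr => I _; rewrite big_split. Qed.

Lemma iid_expZ c F : iid_exp (fun I => c * F I) = c * iid_exp F.
Proof. by rewrite /iid_exp big_distrr; apply: eq_bigr => I _; rewrite mulrCA. Qed.

Lemma iid_exp_sum (n : nat) (F : 'I_n -> {ffun 'I_k -> J} -> R) :
  iid_exp (fun I => \sum_(s < n) F s I) = \sum_(s < n) iid_exp (F s).
Proof. by rewrite /iid_exp exchange_big; apply: eq_bigr => I _; rewrite big_distrr. Qed.

Hypothesis q_ge0 : forall j, 0 <= q j.

Lemma ler_iid_exp F G : (forall I, F I <= G I) -> iid_exp F <= iid_exp G.
Proof. by move=> FG; apply: ler_sum => I _; rewrite ler_wpM2l ?prodr_ge0. Qed.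

Lemma iid_exp_ge0 F : (forall I, 0 <= F I) -> 0 <= iid_exp F.
Proof. by move=> F0; apply: sumr_ge0 => I _; rewrite mulr_ge0 ?prodr_ge0. Qed.

Hypothesis q_sum1 : \sum_j q j = 1.

Lemma sum_iid_weights : \sum_(I : {ffun 'I_k -> J}) \prod_(r < k) q (I r) = 1.
Proof.
rewrite -(bigA_distr_bigA (fun (_ : 'I_k) j => q j)) /=.
by rewrite big1 // => r _; exact: q_sum1.
Qed.

Let prod_if (s : 'I_k) (c : 'I_k -> R) :
  \prod_(r < k) (if r == s then c r else 1) = c s.
Proof. by rewrite -big_mkcond big_pred1_eq. Qed.

Let sum_mul_if (r s : 'I_k) (f : J -> R) :
  \sum_j q j * (if r == s then f j else 1) = if r == s then \sum_j q j * f j else 1.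
Proof. by case: (r == s); under eq_bigr do rewrite ?mulr1. Qed.

Lemma iid_exp_coord (s : 'I_k) (f : J -> R) :
  iid_exp (fun I => f (I s)) = \sum_j q j * f j.
Proof.
rewrite (@eq_iid_exp _ (fun I => \prod_(r < k) (if r == s then f (I r) else 1))).
  rewrite (iid_exp_prod (fun r j => if r == s then f j else 1)).
  by under eq_bigr do rewrite sum_mul_if; rewrite prod_if.
by move=> I; rewrite prod_if.
Qed.

Lemma iid_exp_coord2 (s s' : 'I_k) (f g : J -> R) : s != s' ->
  iid_exp (fun I => f (I s) * g (I s')) = (\sum_j q j * f j) * (\sum_j q j * g j).
Proof.
move=> ss'.
pose h r j := (if r == s then f j else 1) * (if r == s' then g j else 1).
rewrite (@eq_iid_exp _ (fun I => \prod_(r < k) h r (I r))); last first.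
  by move=> I; rewrite big_split /= !prod_if.
rewrite iid_exp_prod -(prod_if s (fun=> \sum_j q j * f j)).
rewrite -(prod_if s' (fun=> \sum_j q j * g j)) -big_split /= /h.
apply: eq_bigr => r _; case: (eqVneq r s) => [->|_]; last first.
  by rewrite mul1r; under eq_bigr do rewrite mul1r; rewrite sum_mul_if.
by rewrite (negbTE ss') mulr1; under eq_bigr do rewrite mulr1.
Qed.

Lemma iid_exp_sqr_mean (u : J -> R) : (0 < k)%N ->
  iid_exp (fun I => (k%:R^-1 * \sum_(s < k) u (I s)) ^+ 2) =
  k%:R^-1 * \sum_j q j * u j ^+ 2 + (1 - k%:R^-1) * (\sum_j q j * u j) ^+ 2.
Proof.
move=> k_gt0.
have cross s : \sum_(s' < k) iid_exp (fun I => u (I s) * u (I s')) =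
    \sum_j q j * u j ^+ 2 + k.-1%:R * (\sum_j q j * u j) ^+ 2.
  rewrite (bigD1 s) //= (iid_exp_coord s (fun j => u j ^+ 2)); congr (_ + _).
  under eq_bigr => s' ss' do rewrite iid_exp_coord2 1?eq_sym // -expr2.
  by rewrite sumr_const cardC1 card_ord mulr_natl.
under eq_iid_exp => I do rewrite exprMn (expr2 (\sum_(s < k) u (I s))) mulr_suml.
under eq_iid_exp do under eq_bigr do rewrite mulr_sumr.
rewrite iid_expZ iid_exp_sum; under eq_bigr do rewrite iid_exp_sum cross.
rewrite sumr_const card_ord -mulr_natl.
have kE : k.-1%:R = k%:R - 1 :> R by rewrite -{2}(prednK k_gt0) -natr1 addrK.
by rewrite kE; field; rewrite pnatr_eq0 -lt0n.
Qed.

End iid_expectation.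

Section gaelr_estimates.
Context {R : realType} {d : nat}.
Implicit Types (w x q : 'I_d -> R) (B : R).

Lemma l1norm_ge0 w : 0 <= l1norm w.
Proof. by apply: sumr_ge0 => i _; exact: normr_ge0. Qed.

Lemma normr_le_l1norm w j : `|w j| <= l1norm w.
Proof. by rewrite /l1norm (bigD1 j) //= lerDl; apply: sumr_ge0 => i _. Qed.

Lemma gaelr_p_ge0 w j : 0 <= gaelr_p w j.
Proof. by rewrite /gaelr_p; case: ifP => _; rewrite ?invr_ge0 ?divr_ge0 ?l1norm_ge0. Qed.

Lemma sum_gaelr_p w : (0 < d)%N -> \sum_j gaelr_p w j = 1.
Proof.
move=> d_gt0; rewrite /gaelr_p; case: eqP => [_|/eqP w_neq0].
  by rewrite sumr_const card_ord -[_ *+ _]mulr_natr mulVf // pnatr_eq0 -lt0n.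
by rewrite -mulr_suml divff.
Qed.

Lemma norm_importance_weight_le w j : `|w j / gaelr_p w j| <= l1norm w.
Proof.
have [->|wj_neq0] := eqVneq (w j) 0; first by rewrite mul0r normr0 l1norm_ge0.
have l1_neq0 : l1norm w != 0.
  apply: contraNneq wj_neq0 => l1_eq0.
  by rewrite -normr_eq0 eq_le normr_ge0 -l1_eq0 normr_le_l1norm.
rewrite /gaelr_p (negbTE l1_neq0) invf_div normrM normf_div !normr_id.
by rewrite (ger0_norm (l1norm_ge0 w)) mulrCA divff ?mulr1 // normr_eq0.
Qed.

Lemma l1norm_gaelr_w_le B (z : state R d) : 0 <= B -> l1norm (gaelr_w B z) <= B.
Proof.
move=> B_ge0; set S := l1norm z.1 + l1norm z.2.
have S_ge0 : 0 <= S by rewrite addr_ge0 ?l1norm_ge0.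
rewrite /l1norm /gaelr_w -/S.
under eq_bigr do rewrite normrM normrM normfV (ger0_norm B_ge0) (ger0_norm S_ge0).
rewrite -!mulr_suml; have [->|S_neq0] := eqVneq S 0; first by rewrite invr0 mulr0.
rewrite ler_pdivrMr ?lt_def ?S_neq0 // mulrC ler_wpM2l //.
by rewrite /S /l1norm -big_split /=; apply: ler_sum => i _; exact: ler_normB.
Qed.

Lemma gaelr_phi_sqr_le B (z : state R d) x y j :
  0 <= B -> (forall j, `|x j| <= 1) -> `|y| <= B ->
  gaelr_phi (gaelr_w B z) x y j ^+ 2 <= 4 * B ^+ 2.
Proof.
move=> B_ge0 x_le1 y_leB; set w := gaelr_w B z.
have wx_le : `|w j / gaelr_p w j * x j| <= B.
  rewrite normrM -[B]mulr1; apply: ler_pM => //.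
  exact: le_trans (norm_importance_weight_le w j) (l1norm_gaelr_w_le B z B_ge0).
have : `|gaelr_phi w x y j| <= 2 * B.
  by rewrite /gaelr_phi; apply: le_trans (ler_normB _ _) _; lra.
rewrite -(ger0_norm (sqr_ge0 (gaelr_phi w x y j))) normrX.
have := normr_ge0 (gaelr_phi w x y j); set a := `|_|; nra.
Qed.

Lemma gaelr_xr_mean_sqr_le q x i :
  (\sum_m q m * gaelr_xr q x m i) ^+ 2 <= x i ^+ 2.
Proof.
rewrite (bigD1 i) //= big1 ?addr0 => [|m /negbTE m_neq_i]; last first.
  by rewrite /gaelr_xr eq_sym m_neq_i mulr0.
rewrite /gaelr_xr eqxx; have [->|qi_neq0] := eqVneq (q i) 0.
  by rewrite mul0r expr0n sqr_ge0.
by rewrite mulrCA divff ?mulr1.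
Qed.

End gaelr_estimates.

Lemma gaelr_sqr_grad_le_given_example (R : realType) (d k : nat) (B : R) (q : 'I_d -> R)
    (z : state R d) (x : 'I_d -> R) (y : R) (i : 'I_d) (r : 'I_k) :
  (0 < k)%N -> 0 <= B -> (forall j, 0 <= q j) -> \sum_j q j = 1 ->
  (forall j, `|x j| <= 1) -> `|y| <= B ->
  iid_exp q (fun I : {ffun 'I_k -> 'I_d} =>
               \sum_j gaelr_p (gaelr_w B z) j * gaelr_g B q z x y I j i ^+ 2)
  <= 4 * B ^+ 2 / k%:R *
       iid_exp q (fun I => \sum_j gaelr_p (gaelr_w B z) j * gaelr_xr q x (I r) i ^+ 2)
     + 4 * B ^+ 2.
Proof.
move=> k_gt0 B_ge0 q_ge0 q_sum1 x_le1 y_leB; set w := gaelr_w B z.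
have p_sum1 : \sum_j gaelr_p w j = 1.
  by apply: sum_gaelr_p; exact: leq_ltn_trans (ltn_ord i).
have g_le (I : {ffun 'I_k -> 'I_d}) : \sum_j gaelr_p w j * gaelr_g B q z x y I j i ^+ 2 <=
    4 * B ^+ 2 * gaelr_xt q x I i ^+ 2.
  rewrite /gaelr_g; under eq_bigr do rewrite exprMn mulrA.
  rewrite -mulr_suml ler_wpM2r ?sqr_ge0 //.
  apply: le_trans (ler_sum _ (fun j _ => ler_wpM2l (gaelr_p_ge0 w j)
    (gaelr_phi_sqr_le B z x y j B_ge0 x_le1 y_leB))) _.
  by rewrite -mulr_suml p_sum1 mul1r.
have xr_moment : iid_exp q (fun I => \sum_j gaelr_p w j * gaelr_xr q x (I r) i ^+ 2) =
    \sum_m q m * gaelr_xr q x m i ^+ 2.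
  by under eq_iid_exp do rewrite -mulr_suml p_sum1 mul1r; exact: iid_exp_coord.
have mean_le1 : (\sum_m q m * gaelr_xr q x m i) ^+ 2 <= 1.
  apply: le_trans (gaelr_xr_mean_sqr_le q x i) _.
  by rewrite -[x i ^+ 2]ger0_norm ?sqr_ge0 // normrX exprn_ile1.
have invk_le1 : k%:R^-1 <= 1 :> R by rewrite invf_le1 ?ltr0n // ler1n.
rewrite xr_moment; apply: le_trans (ler_iid_exp q q_ge0 _ _ g_le) _.
rewrite iid_expZ /gaelr_xt (iid_exp_sqr_mean _ q_sum1 (fun m => gaelr_xr q x m i)) //.
rewrite -mulrA mulrDr lerD2l -[leRHS]mulr1 ler_wpM2l ?mulr_ge0 ?sqr_ge0 //.
by rewrite mulr_ile1 ?sqr_ge0 ?subr_ge0.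
Qed.

Lemma sume_wmean_le_affine (R : realType) (I : finType) (w : I -> R)
    (G H : I -> \bar R) (a b : R) :
  (forall n, 0 <= w n) -> \sum_n w n = 1 -> 0 <= a -> 0 <= b ->
  (forall n, 0 <= H n)%E -> (forall n, G n <= a%:E * H n + b%:E)%E ->
  (\sum_n (w n)%:E * G n <= a%:E * \sum_n (w n)%:E * H n + b%:E)%E.
Proof.
move=> w_ge0 w_sum1 a_ge0 b_ge0 H_ge0 GH.
have wG n : ((w n)%:E * G n <= (w n)%:E * (a%:E * H n + b%:E))%E.
  by rewrite lee_wpmul2l ?lee_fin.
apply: le_trans (lee_sum _ (fun n _ => wG n)) _.
have split n : ((w n)%:E * (a%:E * H n + b%:E) = a%:E * ((w n)%:E * H n) + (w n * b)%:E)%E.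
  by rewrite ge0_muleDr ?mule_ge0 ?lee_fin // muleCA EFinM.
under eq_bigr do rewrite split.
rewrite big_split /= sumEFin -mulr_suml w_sum1 mul1r ge0_sume_distrr //.
by move=> n _; rewrite mule_ge0 ?lee_fin.
Qed.

Section gaelr_rounds.
Local Open Scope ereal_scope.
Context {R : realType} {d k : nat} {dT : measure_display} {T : measurableType dT}.
Variables (B eta : R) (P : probability T R) (X : T -> 'I_d -> R) (Y : T -> R)
  (q : 'I_d -> R).
Hypotheses (q_ge0 : forall j, (0 <= q j)%R) (q_sum1 : (\sum_j q j = 1)%R).

Let round_integrand_ge0 z (F : T -> {ffun 'I_k -> 'I_d} -> 'I_d -> \bar R) om :
  (forall I j, 0 <= F om I j) ->
  0 <= \sum_(I : {ffun 'I_k -> 'I_d}) (\prod_(r < k) q (I r))%:E *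
         \sum_j (gaelr_p (gaelr_w B z) j)%:E * F om I j.
Proof.
move=> F_ge0; apply: sume_ge0 => I _; rewrite mule_ge0 ?lee_fin ?prodr_ge0 //.
by apply: sume_ge0 => j _; rewrite mule_ge0 ?lee_fin ?gaelr_p_ge0.
Qed.

Lemma round_exp_ge0 z (F : T -> {ffun 'I_k -> 'I_d} -> 'I_d -> \bar R) :
  (forall om I j, 0 <= F om I j) -> 0 <= round_exp B P q z F.
Proof. by move=> F_ge0; apply: integral_ge0 => om _; exact: round_integrand_ge0. Qed.

Lemma proc_exp_ge0 (F : state R d -> T -> {ffun 'I_k -> 'I_d} -> 'I_d -> \bar R) t z :
  (forall z om I j, 0 <= F z om I j) -> 0 <= proc_exp B eta P X Y q F t z.
Proof. by move=> F_ge0; elim: t z => [|t IH] z /=; apply: round_exp_ge0. Qed.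

Lemma round_exp_EFin z (F : T -> {ffun 'I_k -> 'I_d} -> 'I_d -> R) :
  round_exp B P q z (fun om I j => (F om I j)%:E) =
  \int[P]_om (iid_exp q (fun I => \sum_j gaelr_p (gaelr_w B z) j * F om I j))%:E.
Proof.
rewrite /round_exp; apply: eq_integral => om _; rewrite /iid_exp -sumEFin.
by apply: eq_bigr => I _; rewrite EFinM -sumEFin; congr (_ * _).
Qed.

Hypothesis d_gt0 : (0 < d)%N.

Lemma round_exp_le_affine z (G H : T -> {ffun 'I_k -> 'I_d} -> 'I_d -> \bar R) (a b : R) :
  (0 < a)%R -> (0 <= b)%R -> (forall om I j, 0 <= G om I j) ->
  (forall om I j, 0 <= H om I j) ->
  (forall om I j, G om I j <= a%:E * H om I j + b%:E) ->
  round_exp B P q z G <= a%:E * round_exp B P q z H + b%:E.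
Proof.
move=> a_gt0 b_ge0 G_ge0 H_ge0 GH.
apply: ae_le_affine_integralT => // [om|om|]; try exact: round_integrand_ge0.
apply: aeW => om.
apply: sume_wmean_le_affine => [I||||I|I]; rewrite ?(ltW a_gt0) //.
- exact: prodr_ge0.
- exact: sum_iid_weights.
- by apply: sume_ge0 => j _; rewrite mule_ge0 ?lee_fin ?gaelr_p_ge0.
apply: sume_wmean_le_affine => [j||||j|j]; rewrite ?(ltW a_gt0) //.
- exact: gaelr_p_ge0.
- exact: sum_gaelr_p.
Qed.

Lemma proc_exp_le_affine (F G : state R d -> T -> {ffun 'I_k -> 'I_d} -> 'I_d -> \bar R)
    (a b : R) :
  (0 < a)%R -> (0 <= b)%R -> (forall z om I j, 0 <= F z om I j) ->
  (forall z om I j, 0 <= G z om I j) ->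
  (forall z, round_exp B P q z (F z) <= a%:E * round_exp B P q z (G z) + b%:E) ->
  forall t z, proc_exp B eta P X Y q F t z <= a%:E * proc_exp B eta P X Y q G t z + b%:E.
Proof.
move=> a_gt0 b_ge0 F_ge0 G_ge0 FG; elim=> [|t IH] z //=.
by apply: round_exp_le_affine => // *; apply: proc_exp_ge0.
Qed.

End gaelr_rounds.

Section gaelr_process.
Context {R : realType} {dT : measure_display} {T : measurableType dT}.
Variables (P : probability T R) (d k : nat) (X : T -> 'I_d -> R) (Y : T -> R)
  (B eta : R) (q : 'I_d -> R).
Hypotheses (X_le1 : {ae P, forall om, forall i, `|X om i| <= 1})
  (Y_leB : {ae P, forall om, `|Y om| <= B}) (B_gt0 : 0 < B)
  (q_ge0 : forall j, 0 <= q j) (q_sum1 : \sum_j q j = 1) (k_gt0 : (0 < k)%N).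

Lemma round_exp_sqr_grad_le (z : state R d) (i : 'I_d) (r : 'I_k) :
  (round_exp B P q z (fun om (I : {ffun 'I_k -> 'I_d}) j =>
      (gaelr_g B q z (X om) (Y om) I j i ^+ 2)%:E)
   <= (4 * B ^+ 2 / k%:R)%:E *
        round_exp B P q z (fun om I j => (gaelr_xr q (X om) (I r) i ^+ 2)%:E)
      + (4 * B ^+ 2)%:E)%E.
Proof.
rewrite !round_exp_EFin.
have iid_ge0 (F : {ffun 'I_k -> 'I_d} -> 'I_d -> R) : (forall I j, 0 <= F I j ^+ 2) ->
    (0 <= (iid_exp q (fun I => \sum_j gaelr_p (gaelr_w B z) j * F I j ^+ 2))%:E)%E.
  move=> F_ge0; rewrite lee_fin iid_exp_ge0 // => I.
  by apply: sumr_ge0 => j _; rewrite mulr_ge0 ?gaelr_p_ge0.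
apply: ae_le_affine_integralT; rewrite ?divr_gt0 ?mulr_gt0 ?exprn_gt0 ?ltr0n //.
- by rewrite mulr_ge0 ?sqr_ge0.
- by move=> om; apply: iid_ge0 => I j; rewrite sqr_ge0.
- by move=> om; apply: iid_ge0 => I j; rewrite sqr_ge0.
apply: filterS2 X_le1 Y_leB => om x_le1 y_leB.
by rewrite -EFinM -EFinD lee_fin gaelr_sqr_grad_le_given_example // ltW.
Qed.

Lemma Eg2_le_affine (t : nat) (r : 'I_k) (i : 'I_d) :
  (Eg2 k B eta P X Y q t i
   <= (4 * B ^+ 2 / k%:R)%:E * Exr2 B eta P X Y q t r i + (4 * B ^+ 2)%:E)%E.
Proof.
have d_gt0 : (0 < d)%N by exact: leq_ltn_trans (ltn_ord i).
apply: proc_exp_le_affine => // [|||z|z].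
- by rewrite divr_gt0 ?ltr0n // mulr_gt0 ?exprn_gt0 // ltr0n.
- by rewrite mulr_ge0 ?sqr_ge0.
- by move=> *; exact: sqr_ge0.
- by move=> *; exact: sqr_ge0.
exact: round_exp_sqr_grad_le.
Qed.

End gaelr_process.

Theorem lemma12 (R : realType) (dT : measure_display) (T : measurableType dT)
  (P : probability T R) (d : nat) (X : T -> 'I_d -> R) (Y : T -> R)
  (B eta : R) (q : 'I_d -> R) (k : nat) :
  (forall i, measurable_fun setT (fun om => X om i)) ->
  measurable_fun setT Y ->
  {ae P, forall om, forall i, `|X om i| <= 1} ->
  {ae P, forall om, `|Y om| <= B} ->
  0 < B -> 0 < eta ->
  (forall i, 0 <= q i) -> \sum_(i < d) q i = 1 ->
  (0 < k)%N ->
  forall (t : nat), (1 <= t)%N -> forall r : 'I_k,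
  (enorm_inf (Eg2 k B eta P X Y q t)
   <= (4 * B ^+ 2)%:E * ((k%:R^-1)%:E * enorm_inf (Exr2 B eta P X Y q t r) + 1))%E.
Proof.
move=> _ _ X_le1 Y_leB B_gt0 _ q_ge0 q_sum1 k_gt0 t _ r.
set M := enorm_inf (Exr2 B eta P X Y q t r).
have M_ge0 : (0 <= M)%E by exact: bigmax_ge_id.
have c_ge0 : 0 <= 4 * B ^+ 2 by rewrite mulr_ge0 ?sqr_ge0.
rewrite ge0_muleDr ?mule_ge0 ?lee_fin ?invr_ge0 // mule1 muleA -EFinM.
apply: bigmax_le => [|i _].
  by apply: adde_ge0; [apply: mule_ge0|]; rewrite // lee_fin // mulr_ge0 ?invr_ge0.
apply: le_trans
  (Eg2_le_affine _ _ _ _ _ _ eta _ X_le1 Y_leB B_gt0 q_ge0 q_sum1 k_gt0 t r i) _.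
by rewrite leeD2r // lee_wpmul2l ?lee_fin ?divr_ge0 //; exact: le_bigmax.
Qed.
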